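(* Let $\mathcal{A}$ be a finite set of $m$ alternatives and $\mathcal{R}=(R_1,\dots,R_n)$ a sequence of reflexive binary relations on $\mathcal{A}$. Construct the weighted directed graph $G$ whose nodes are a source $s$, a sink $t$, one node for each alternative $a\in\mathcal{A}$, and one node $v_{(a,b)}$ for each ordered pair $(a,b)$ of distinct alternatives, with the following arcs: for each ordered pair $(a,b)$ of distinct alternatives, an arc $s\to v_{(a,b)}$ of weight $N(a,b)$, an arc $v_{(a,b)}\to t$ of weight $N(b,a)$, and arcs $a\to v_{(a,b)}$ and $v_{(a,b)}\to a$ each of weight $L$, where $L>(mn)^5$; and for each unordered pair $\{a,b\}$ of distinct alternatives, arcs $a\to b$ and $b\to a$ each of weight $E(a,b)=E(b,a)$. An $s$-$t$ cut is a partition $(A,B)$ of the node set with $s\in A$, $t\in B$; its capacity is the total weight of arcs from $A$ to $B$; a minimum cut is one of minimum capacity. Then: (1) If $(A,B)$ is a minimum cut, then the dichotomous weak order given by the ordered partition $(A\cap\mathcal{A},\,B\cap\mathcal{A})$ of the alternatives has cost equal to $\mathrm{MP}(\mathcal{R},2\text{-}\mathrm{WO})$. (2) If the dichotomous weak order given by $(A',B')$ has cost equal to $\mathrm{MP}(\mathcal{R},2\text{-}\mathrm{WO})$, then $(A,B)$ is a minimum cut, where $A$ consists of $s$, the nodes of the alternatives in $A'$, and the nodes $v_{(x,y)}$ with $x\in A'$, and $B$ consists of all remaining nodes.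
   Context: For alternatives $a,b\in\mathcal{A}$, let $N(a,b)$ be the number of indices $i$ with $(a,b)\in R_i$ and $(b,a)\notin R_i$, and $E(a,b)$ the number of indices $i$ with $(a,b)\in R_i$ and $(b,a)\in R_i$. A dichotomous weak order on $\mathcal{A}$ is given by an ordered partition $(A_1,A_2)$ of $\mathcal{A}$ (disjoint, union $\mathcal{A}$): every alternative of $A_1$ is strictly preferred to every alternative of $A_2$ and alternatives in the same part are tied. Its cost is $$\sum_{a\in A_1,\ b\in A_2}\big(2N(b,a)+E(b,a)\big)+\sum_{\{a,b\}:\ a\neq b,\ a,b\text{ in the same part}}\big(N(a,b)+N(b,a)\big),$$ the second sum over unordered pairs of distinct alternatives; $\mathrm{MP}(\mathcal{R},2\text{-}\mathrm{WO})$ denotes the minimum cost over all dichotomous weak orders on $\mathcal{A}$. *)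

From mathcomp Require Import all_boot.
Set Implicit Arguments. Unset Strict Implicit. Unset Printing Implicit Defensive.

Section Defs.
Variables (T : finType) (n : nat) (R : 'I_n -> rel T).

Definition Ncnt (a b : T) : nat := #|[set i : 'I_n | R i a b && ~~ R i b a]|.
Definition Ecnt (a b : T) : nat := #|[set i : 'I_n | R i a b && R i b a]|.

(* Cost of the dichotomous weak order given by the ordered partition
   (A1, ~: A1).  Unordered pairs {a,b} of distinct alternatives are
   enumerated once each via enum_rank a < enum_rank b. *)
Definition dwo_cost (A1 : {set T}) : nat :=
  \sum_(a in A1) \sum_(b in ~: A1) (2 * Ncnt b a + Ecnt b a)
  + \sum_(a : T) \sum_(b : T | (enum_rank a < enum_rank b)
                                && ((a \in A1) == (b \in A1)))
       (Ncnt a b + Ncnt b a).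

Definition MP2WO : nat := \big[minn/dwo_cost setT]_(A1 : {set T}) dwo_cost A1.

Definition pairT := {p : T * T | p.1 != p.2}.
Definition node := ((bool + T) + pairT)%type.
Definition src : node := inl (inl true).
Definition snk : node := inl (inl false).
Definition alt (a : T) : node := inl (inr a).
Definition vtx (p : pairT) : node := inr p.

Variable L : nat.

Definition wG (u v : node) : nat :=
  match u, v with
  | inl (inl true), inr p => Ncnt (val p).1 (val p).2
  | inr p, inl (inl false) => Ncnt (val p).2 (val p).1
  | inl (inr a), inr p => if (val p).1 == a then L else 0
  | inr p, inl (inr a) => if (val p).1 == a then L else 0
  | inl (inr a), inl (inr b) => if a != b then Ecnt a b else 0
  | _, _ => 0
  end.

(* s-t cuts, represented by the source side A (B = ~: A) *)
Definition st_cut (A : {set node}) : bool := (src \in A) && (snk \notin A).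
Definition cut_cap (A : {set node}) : nat :=
  \sum_(u in A) \sum_(v in ~: A) wG u v.
Definition min_cut (A : {set node}) : Prop :=
  st_cut A /\ forall A' : {set node}, st_cut A' -> cut_cap A <= cut_cap A'.

Definition cut_of (A' : {set T}) : {set node} :=
  [set u : node | match u with
                  | inl (inl b) => b
                  | inl (inr a) => a \in A'
                  | inr p => (val p).1 \in A'
                  end].

Definition alt_side (A : {set node}) : {set T} := [set a | alt a \in A].
End Defs.

(** Each arc of weight L joins v_(a,b) to a, while the other two arcs at
    v_(a,b) weigh N(a,b), N(b,a) <= n <= L.  Hence moving every v_(a,b) to the
    side of a never increases the capacity of a cut, and a minimum cut may be
    assumed to be the aligned cut of its alternatives.  The aligned cut of a
    partition (A', B') has capacity exactly the cost of the weak order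
    (A', B'): for a in A' and b in B' the arcs v_(a,b) -> t, s -> v_(b,a) and
    a -> b contribute 2 N(b,a) + E(a,b), and for a, b on the same side the two
    arcs into t (or out of s) at v_(a,b), v_(b,a) contribute N(a,b) + N(b,a). *)

From mathcomp Require Import all_boot zify.
Set Implicit Arguments. Unset Strict Implicit. Unset Printing Implicit Defensive.

Section DoubleBigops.
Variables (M : Type) (idx : M) (op : Monoid.com_law idx) (I : finType).
Implicit Type F : I -> I -> M.

Lemma big_setCX_mkcond (S : {set I}) F :
  \big[op/idx]_(i in S) \big[op/idx]_(j in ~: S) F i j
  = \big[op/idx]_i \big[op/idx]_j (if (i \in S) && (j \notin S) then F i j else idx).
Proof.
rewrite big_mkcond; apply: eq_bigr => i _; case: (i \in S); last by rewrite big1.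
by rewrite big_mkcond; apply: eq_bigr => j _; rewrite in_setC.
Qed.

Lemma big_distinct_pairs F : (forall i, F i i = idx) ->
  \big[op/idx]_i \big[op/idx]_j F i j
  = \big[op/idx]_i \big[op/idx]_(j | enum_rank i < enum_rank j) op (F i j) (F j i).
Proof.
move=> F0; have split_row i : \big[op/idx]_j F i j
    = op (\big[op/idx]_(j | enum_rank i < enum_rank j) F i j)
         (\big[op/idx]_(j | enum_rank j < enum_rank i) F i j).
  rewrite (bigID (fun j => enum_rank i < enum_rank j)) /=; congr (op _ _).
  rewrite (bigD1 i) ?ltnn //= F0 Monoid.mul1m; apply: eq_bigl => j.
  by rewrite -(inj_eq enum_rank_inj) -(inj_eq val_inj) /=; lia.
under eq_bigr do rewrite split_row.
under [RHS]eq_bigr do rewrite big_split.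
rewrite !big_split /=; congr (op _ _).
by rewrite (exchange_big_dep predT).
Qed.
End DoubleBigops.

Section CutCapacity.
Variables (T : finType) (n : nat) (R : 'I_n -> rel T) (L : nat).
Local Notation N := (Ncnt R).
Local Notation E := (Ecnt R).

Lemma big_node (F : node T -> nat) :
  \sum_u F u = F (src T) + F (snk T) + \sum_a F (alt a) + \sum_p F (vtx p).
Proof. by rewrite !big_sumType big_bool. Qed.

Lemma big_pairT (F : T -> T -> nat) :
  \sum_(p : pairT T) F (val p).1 (val p).2
  = \sum_a \sum_b (if a != b then F a b else 0).
Proof. by rewrite pair_big -big_mkcond (big_sub [pred p : T * T | p.1 != p.2]). Qed.

Lemma Ecnt_sym a b : E a b = E b a.
Proof. by rewrite /Ecnt; apply: eq_card => i; rewrite !inE andbC. Qed.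

Lemma Ncnt_le a b : N a b <= n.
Proof. by rewrite /Ncnt (leq_trans (max_card _)) ?card_ord. Qed.

(* Capacity of the cut arcs among s -> v_(a,b) -> t and a <-> v_(a,b), where
   p = (a,b) and a_in, v_in say whether a and v_(a,b) are on the source side. *)
Definition pair_cap (a_in v_in : bool) (p : pairT T) : nat :=
  if v_in then N (val p).2 (val p).1 + (if a_in then 0 else L)
  else N (val p).1 (val p).2 + (if a_in then L else 0).

Definition alt_cap (A : {set node T}) : nat :=
  \sum_a \sum_b (if (alt a \in A) && (alt b \notin A) && (a != b) then E a b else 0).

Definition out_cap (A : {set node T}) (u : node T) : nat :=
  \sum_v (if (u \in A) && (v \notin A) then wG R L u v else 0).

Lemma cut_cap_out A : cut_cap R L A = \sum_u out_cap A u.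
Proof. exact: big_setCX_mkcond. Qed.

Section OutCapacities.
Variable A : {set node T}.
Hypotheses (src_in : src T \in A) (snk_out : snk T \notin A).

Lemma out_cap_src :
  out_cap A (src T) = \sum_p (if vtx p \in A then 0 else N (val p).1 (val p).2).
Proof.
rewrite /out_cap big_node /= src_in snk_out /= big1 => [|a _]; last exact: if_same.
by rewrite !add0n; apply: eq_bigr => p _; rewrite if_neg.
Qed.

Lemma out_cap_snk : out_cap A (snk T) = 0.
Proof. by rewrite /out_cap big1 // (negbTE snk_out). Qed.

Lemma out_cap_alt a : out_cap A (alt a) =
  \sum_b (if (alt a \in A) && (alt b \notin A) && (a != b) then E a b else 0)
  + \sum_p (if (val p).1 == a then
             if (alt a \in A) && (vtx p \notin A) then L else 0 else 0).
Proof.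
rewrite /out_cap big_node /= src_in snk_out /= andbT.
by case: (alt a \in A); rewrite add0n; congr (_ + _); apply: eq_bigr => ? _; do !case: ifP.
Qed.

Lemma out_cap_vtx p : out_cap A (vtx p) =
  if vtx p \in A then N (val p).2 (val p).1 + (if alt (val p).1 \in A then 0 else L)
  else 0.
Proof.
rewrite /out_cap big_node /= src_in snk_out /= andbF andbT.
case: (vtx p \in A) => /=; last by rewrite !big1.
rewrite add0n [X in _ + X]big1 => [|q _]; last by case: ifP.
rewrite addn0 (bigD1 (val p).1) //= eqxx big1 => [|a /negbTE]; last first.
  by rewrite eq_sym => ->; case: ifP.
by rewrite addn0 if_neg.
Qed.

End OutCapacities.

Lemma cut_capE A : st_cut A ->
  cut_cap R L A = \sum_p pair_cap (alt (val p).1 \in A) (vtx p \in A) p + alt_cap A.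
Proof.
case/andP => src_in snk_out.
rewrite cut_cap_out big_node out_cap_src // out_cap_snk // addn0.
under [X in _ + X + _]eq_bigr do rewrite out_cap_alt //.
under [X in _ + X]eq_bigr do rewrite out_cap_vtx //.
rewrite big_split /= -/(alt_cap A) exchange_big /=.
under [X in _ + (_ + X) + _]eq_bigr => p _.
  rewrite -big_mkcond (big_pred1 (val p).1) => [|a]; last by rewrite /= eq_sym.
over.
rewrite [X in X + _]addnCA -addnA addnC -!big_split; congr (_ + _).
apply: eq_bigr => p _; rewrite /pair_cap.
by case: (vtx p \in A); case: (alt _ \in A); rewrite /= ?addn0.
Qed.

Lemma st_cut_of (S : {set T}) : st_cut (cut_of S).
Proof. by rewrite /st_cut !inE. Qed.

Lemma cut_cap_of (S : {set T}) : cut_cap R L (cut_of S) = dwo_cost R S.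
Proof.
rewrite cut_capE ?st_cut_of // /alt_cap /dwo_cost.
pose side_cost a b := if a \in S then N b a else N a b.
rewrite (eq_bigr (fun p : pairT T => side_cost (val p).1 (val p).2)); last first.
  by move=> p _; rewrite /pair_cap !inE /= /side_cost; case: ((val p).1 \in S); rewrite addn0.
rewrite big_pairT -big_split /=; under eq_bigr do rewrite -big_split /=.
rewrite big_distinct_pairs; last by move=> a; rewrite !inE eqxx andbF.
rewrite big_setCX_mkcond big_distinct_pairs; last by move=> a; rewrite andbN.
under [X in _ = _ + X]eq_bigr do rewrite big_mkcondr.
rewrite -big_split; apply: eq_bigr => a _; rewrite -big_split; apply: eq_bigr => b lt_ab.
have nab : a != b by apply: contraTneq lt_ab => ->; rewrite ltnn.
rewrite !inE /= nab eq_sym nab (Ecnt_sym b a) /side_cost.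
by case: (a \in S); case: (b \in S) => /=; lia.
Qed.

Lemma Ncnt_lt_L (L_big : (#|T| * n) ^ 5 < L) a b : N a b < L.
Proof.
have T_gt0 : 0 < #|T| by apply/card_gt0P; exists a.
apply: leq_ltn_trans (Ncnt_le a b) (leq_ltn_trans _ L_big).
rewrite (leq_trans (leq_pmull n T_gt0)) //.
by case: (#|T| * n) => // k; rewrite -{1}(expn1 k.+1) leq_pexp2l.
Qed.

Lemma pair_cap_aligned (a_in v_in : bool) p : (forall a b, N a b <= L) ->
  pair_cap a_in a_in p <= pair_cap a_in v_in p.
Proof.
move=> N_le; have := N_le (val p).1 (val p).2; have := N_le (val p).2 (val p).1.
by rewrite /pair_cap; case: a_in; case: v_in => /=; lia.
Qed.

Lemma cut_cap_of_alt_side A : (forall a b, N a b <= L) -> st_cut A ->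
  cut_cap R L (cut_of (alt_side A)) <= cut_cap R L A.
Proof.
move=> N_le stA; rewrite !cut_capE ?st_cut_of //.
have -> : alt_cap (cut_of (alt_side A)) = alt_cap A.
  by apply: eq_bigr => a _; apply: eq_bigr => b _; rewrite !inE /= !inE.
by rewrite leq_add2r leq_sum // => p _; rewrite !inE /= !inE; exact: pair_cap_aligned.
Qed.

Lemma MP2WO_le_cost A1 : MP2WO R <= dwo_cost R A1.
Proof.
rewrite /MP2WO; have : A1 \in index_enum {set T} by rewrite mem_index_enum.
elim: (index_enum _) => [//|A2 As IH]; rewrite inE big_cons.
by case/predU1P => [<-|/IH]; [rewrite geq_minl | apply: leq_trans; rewrite geq_minr].
Qed.

Lemma le_MP2WO c : (forall A1, c <= dwo_cost R A1) -> c <= MP2WO R.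
Proof.
by move=> c_le; apply: (big_ind (leq c)) => // x y cx cy; rewrite leq_min cx cy.
Qed.
End CutCapacity.

Theorem mainTheorem2 (T : finType) (n : nat) (R : 'I_n -> rel T)
    (Rrefl : forall i, reflexive (R i))
    (L : nat) (HL : (#|T| * n) ^ 5 < L) :
  (forall A : {set node T},
     min_cut R L A -> dwo_cost R (alt_side A) = MP2WO R)
  /\
  (forall A' : {set T},
     dwo_cost R A' = MP2WO R -> min_cut R L (cut_of A')).
Proof.
have N_le a b : Ncnt R a b <= L by exact/ltnW/Ncnt_lt_L.
split=> [A [stA minA] | A' optA'].
  apply/eqP; rewrite eqn_leq MP2WO_le_cost andbT; apply: le_MP2WO => A1.
  rewrite -!(cut_cap_of _ L) (leq_trans (cut_cap_of_alt_side N_le stA)) //.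
  exact: minA (st_cut_of _).
split=> [|A stA]; first exact: st_cut_of.
rewrite cut_cap_of optA' (leq_trans (MP2WO_le_cost _ (alt_side A))) // -(cut_cap_of _ L).
exact: cut_cap_of_alt_side.
Qed.
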